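(* Let $x_1,x_2,y_1,y_2\in\mathbb{R}$, $d>0$, $\eta>0$, $\sigma^2>0$, $R>0$, $\tilde\epsilon=\frac{\sigma^2}{\eta}(e^R-1)$ and $\tilde\tau_m=\tilde\epsilon(y_m^2+d^2)$. Consider $$\min_{P_1,P_2,x\in\mathbb{R}}\ P_1+P_2\quad\text{s.t.}\quad -P_2+\frac{\tilde\epsilon\eta}{\sigma^2}P_1+\tilde\epsilon(x-x_2)^2+\tilde\tau_2\le0,\qquad -P_1+\tilde\epsilon(x-x_1)^2+\tilde\tau_1\le0.$$ Its optimal solution is $$x^*=\frac{x_2}{e^R+1}+\frac{e^Rx_1}{e^R+1},\quad P_1^*=\tilde\epsilon(x^*-x_1)^2+\tilde\tau_1,\quad P_2^*=\frac{\tilde\epsilon\eta}{\sigma^2}P_1^*+\tilde\epsilon(x^*-x_2)^2+\tilde\tau_2.$$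
   Context: This is a relaxed total-power-minimization problem for two-user NOMA with a pinching antenna at $(x,0,d)$, where user 1 performs successive interference cancellation; the constraints encode that user 2's rate and user 1's own rate are at least $R$. *)

From Stdlib Require Import Reals.
Open Scope R_scope.

Definition eps_t (sigma2 eta Rt : R) : R := sigma2 / eta * (exp Rt - 1).

Definition tau_t (sigma2 eta Rt y d : R) : R := eps_t sigma2 eta Rt * (y ^ 2 + d ^ 2).

Definition feasible (x1 x2 y1 y2 d eta sigma2 Rt : R) (P1 P2 x : R) : Prop :=
  let e := eps_t sigma2 eta Rt in
  - P2 + e * eta / sigma2 * P1 + e * (x - x2) ^ 2 + tau_t sigma2 eta Rt y2 d <= 0 /\
  - P1 + e * (x - x1) ^ 2 + tau_t sigma2 eta Rt y1 d <= 0.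

Definition optimal (x1 x2 y1 y2 d eta sigma2 Rt : R) (P1 P2 x : R) : Prop :=
  feasible x1 x2 y1 y2 d eta sigma2 Rt P1 P2 x /\
  forall Q1 Q2 z, feasible x1 x2 y1 y2 d eta sigma2 Rt Q1 Q2 z -> P1 + P2 <= Q1 + Q2.

From Stdlib Require Import Reals Lra Psatz.
Open Scope R_scope.

(* With E = e^R, the coupling coefficient eps eta / sigma^2 equals E - 1.  Writing
   s1, s2 >= 0 for the slacks of the two constraints, the objective splits exactly as
     P1 + P2 = P1s + P2s + eps (E + 1) (x - xs)^2 + E s1 + s2,
   because E (x - x1)^2 + (x - x2)^2 is a parabola in x with vertex xs.  All three
   correction terms are nonnegative, so (P1s, P2s, xs) is a minimum, and it is the
   only one: at any minimiser all three terms vanish. *)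

Section CoupledPowerMinimisation.

Variables a E T1 T2 x1 x2 : R.

Definition min_point : R := x2 / (E + 1) + E * x1 / (E + 1).

Definition power1_floor (x : R) : R := a * (x - x1) ^ 2 + T1.

Definition power2_floor (P1 x : R) : R := (E - 1) * P1 + a * (x - x2) ^ 2 + T2.

Definition min_total_power : R :=
  power1_floor min_point + power2_floor (power1_floor min_point) min_point.

Lemma total_power_decomposition (P1 P2 x : R) :
  E + 1 <> 0 ->
  P1 + P2 = min_total_power + a * (E + 1) * (x - min_point) ^ 2
            + E * (P1 - power1_floor x) + (P2 - power2_floor P1 x).
Proof.
  intros HE.
  unfold min_total_power, power2_floor, power1_floor.
  assert (Hvertex : x2 = (E + 1) * min_point - E * x1) by (unfold min_point; field; exact HE).
  rewrite Hvertex; ring.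
Qed.

Lemma total_power_ge_min (P1 P2 x : R) :
  0 <= a -> 0 <= E -> power1_floor x <= P1 -> power2_floor P1 x <= P2 -> min_total_power <= P1 + P2.
Proof.
  intros Ha HE H1 H2.
  rewrite (total_power_decomposition P1 P2 x) by lra.
  assert (0 <= a * (E + 1) * (x - min_point) ^ 2).
  { apply Rmult_le_pos; [nra | apply pow2_ge_0]. }
  nra.
Qed.

Lemma total_power_min_unique (P1 P2 x : R) :
  0 < a -> 0 < E -> power1_floor x <= P1 -> power2_floor P1 x <= P2 -> P1 + P2 <= min_total_power ->
  x = min_point /\ P1 = power1_floor min_point
  /\ P2 = power2_floor (power1_floor min_point) min_point.
Proof.
  intros Ha HE H1 H2 Hmin.
  rewrite (total_power_decomposition P1 P2 x) in Hmin by lra.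
  assert (Hsq : 0 <= (x - min_point) ^ 2) by apply pow2_ge_0.
  assert (Hw : 0 < a * (E + 1)) by nra.
  assert (Hx : (x - min_point) ^ 2 = 0).
  { apply Rle_antisym; [| exact Hsq].
    apply (Rmult_le_reg_l (a * (E + 1))); [exact Hw |]. nra. }
  assert (x = min_point) by nra.
  subst x.
  assert (P1 = power1_floor min_point) by nra.
  subst P1; split; [reflexivity | split; [reflexivity | nra]].
Qed.

End CoupledPowerMinimisation.

Lemma eps_t_pos (sigma2 eta Rt : R) :
  0 < sigma2 -> 0 < eta -> 0 < Rt -> 0 < eps_t sigma2 eta Rt.
Proof.
  intros Hs He HR.
  assert (1 < exp Rt) by (rewrite <- exp_0; apply exp_increasing; exact HR).
  unfold eps_t; apply Rmult_lt_0_compat; [apply Rdiv_lt_0_compat |]; lra.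
Qed.

Lemma eps_t_coupling (sigma2 eta Rt : R) :
  0 < sigma2 -> 0 < eta -> eps_t sigma2 eta Rt * eta / sigma2 = exp Rt - 1.
Proof. intros Hs He; unfold eps_t; field; lra. Qed.

Lemma feasible_iff_floors (x1 x2 y1 y2 d eta sigma2 Rt P1 P2 x : R) :
  0 < sigma2 -> 0 < eta ->
  let a := eps_t sigma2 eta Rt in
  let T1 := tau_t sigma2 eta Rt y1 d in
  let T2 := tau_t sigma2 eta Rt y2 d in
  feasible x1 x2 y1 y2 d eta sigma2 Rt P1 P2 x <->
  power1_floor a T1 x1 x <= P1 /\ power2_floor a (exp Rt) T2 x2 P1 x <= P2.
Proof.
  intros Hs He a T1 T2.
  unfold feasible, power1_floor, power2_floor.
  rewrite eps_t_coupling by assumption.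
  fold a T1 T2; lra.
Qed.

Theorem lemma5 (x1 x2 y1 y2 d eta sigma2 Rt : R) :
  0 < d -> 0 < eta -> 0 < sigma2 -> 0 < Rt ->
  let e := eps_t sigma2 eta Rt in
  let xs := x2 / (exp Rt + 1) + exp Rt * x1 / (exp Rt + 1) in
  let P1s := e * (xs - x1) ^ 2 + tau_t sigma2 eta Rt y1 d in
  let P2s := e * eta / sigma2 * P1s + e * (xs - x2) ^ 2 + tau_t sigma2 eta Rt y2 d in
  optimal x1 x2 y1 y2 d eta sigma2 Rt P1s P2s xs /\
  (forall P1 P2 x, optimal x1 x2 y1 y2 d eta sigma2 Rt P1 P2 x ->
     P1 = P1s /\ P2 = P2s /\ x = xs).
Proof.
  intros _ Heta Hs HR e xs P1s P2s.
  set (T1 := tau_t sigma2 eta Rt y1 d).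
  set (T2 := tau_t sigma2 eta Rt y2 d).
  assert (Heps : 0 < e) by (apply eps_t_pos; assumption).
  assert (Hexp : 0 < exp Rt) by apply exp_pos.
  assert (Hfeas := fun P1 P2 x => feasible_iff_floors x1 x2 y1 y2 d eta sigma2 Rt P1 P2 x Hs Heta).
  assert (HP2s : P2s = power2_floor e (exp Rt) T2 x2 P1s xs).
  { unfold P2s, e, power2_floor; rewrite eps_t_coupling by assumption; reflexivity. }
  assert (Hmin : P1s + P2s = min_total_power e (exp Rt) T1 T2 x1 x2) by (rewrite HP2s; reflexivity).
  assert (Hs_feas : feasible x1 x2 y1 y2 d eta sigma2 Rt P1s P2s xs).
  { apply Hfeas; rewrite HP2s; split; apply Rle_refl. }
  split.
  - split; [exact Hs_feas |].
    intros Q1 Q2 z [Hz1 Hz2]%Hfeas.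
    rewrite Hmin; exact (total_power_ge_min _ _ _ _ _ _ _ _ _ (Rlt_le _ _ Heps) (Rlt_le _ _ Hexp) Hz1 Hz2).
  - intros P1 P2 x [[H1 H2]%Hfeas Hopt].
    assert (Hle := Hopt _ _ _ Hs_feas).
    rewrite Hmin in Hle.
    destruct (total_power_min_unique _ _ _ _ _ _ _ _ _ Heps Hexp H1 H2 Hle) as (-> & -> & ->).
    rewrite HP2s; repeat split.
Qed.
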